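(* For generic $x_0,x_1,\dots,x_L$, the six-vertex partition function with domain-wall boundaries satisfies, for every $0\le m\le L$, \[ \sum_{i=0}^L\rho_i^{(m)}\,Z(X_i^0)=0, \] where $X_0^0:=X$ and \[ \rho_i^{(m)}=\begin{cases}\dfrac{c(x_m-x_0)}{b(x_m-x_0)}\displaystyle\prod_{k=1}^Lb(x_0-\mu_k)\prod_{\substack{k=1\\k\ne m}}^L\frac{a(x_0-x_k)}{b(x_0-x_k)} & i=0,\ m\ne0,\\[2ex] \displaystyle\prod_{k=1}^La(x_m-\mu_k)-\prod_{k=1}^Lb(x_m-\mu_k)\prod_{\substack{k=0\\k\ne m}}^L\frac{a(x_m-x_k)}{b(x_m-x_k)} & i=m,\\[2ex] \dfrac{c(x_m-x_i)}{b(x_m-x_i)}\displaystyle\prod_{k=1}^Lb(x_i-\mu_k)\prod_{\substack{k=0\\k\ne i,m}}^L\frac{a(x_i-x_k)}{b(x_i-x_k)} & \text{otherwise.}\end{cases} \]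
   Context: Six-vertex setup. Fix $\gamma\in\mathbb C$, $L\ge1$ and $\mu_1,\dots,\mu_L\in\mathbb C$. Let $a(x)=\sinh(x+\gamma)$, $b(x)=\sinh x$, $c(x)=\sinh\gamma$ (constant). With $v_1,v_2$ the standard basis of $\mathbb C^2$, let $R(x)$ be the matrix on $\mathbb C^2\otimes\mathbb C^2$ which in the ordered basis $v_1\otimes v_1,v_1\otimes v_2,v_2\otimes v_1,v_2\otimes v_2$ is $\begin{pmatrix}a(x)&0&0&0\\0&b(x)&c(x)&0\\0&c(x)&b(x)&0\\0&0&0&a(x)\end{pmatrix}$. On $\mathbb C^2_0\otimes(\mathbb C^2)^{\otimes L}$, let $T_0(x)=R_{01}(x-\mu_1)R_{02}(x-\mu_2)\cdots R_{0L}(x-\mu_L)$ (with $R_{0i}$ acting on the auxiliary factor $0$ and quantum factor $i$), written in the auxiliary space as $\begin{pmatrix}A(x)&B(x)\\C(x)&D(x)\end{pmatrix}$. With $|0\rangle=v_1^{\otimes L}$ and $\langle\bar0|=(v_2^* )^{\otimes L}$, the partition function of the six-vertex model with domain-wall boundaries is $Z(x_1,\dots,x_L)=\langle\bar0|B(x_1)B(x_2)\cdots B(x_L)|0\rangle$. Notation: $X=(x_1,\dots,x_L)$; for $1\le i\le L$, $X_i^0$ is $X$ with $x_i$ replaced by $x_0$. *)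

From Stdlib Require Import Reals List Bool Arith.
Import ListNotations.
Open Scope R_scope.

Record Cx := mkC { Re : R; Im : R }.

Definition C0 : Cx := mkC 0 0.
Definition C1 : Cx := mkC 1 0.
Definition Cadd (z w : Cx) : Cx := mkC (Re z + Re w) (Im z + Im w).
Definition Copp (z : Cx) : Cx := mkC (- Re z) (- Im z).
Definition Csub (z w : Cx) : Cx := Cadd z (Copp w).
Definition Cmul (z w : Cx) : Cx :=
  mkC (Re z * Re w - Im z * Im w) (Re z * Im w + Im z * Re w).
Definition Cinv (z : Cx) : Cx :=
  mkC (Re z / (Re z * Re z + Im z * Im z)) (- Im z / (Re z * Re z + Im z * Im z)).
Definition Cdiv (z w : Cx) : Cx := Cmul z (Cinv w).

Definition Cexp (z : Cx) : Cx := mkC (exp (Re z) * cos (Im z)) (exp (Re z) * sin (Im z)).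
Definition Csinh (z : Cx) : Cx := Cmul (Csub (Cexp z) (Cexp (Copp z))) (mkC (1/2) 0).

Definition Csum (l : list Cx) : Cx := fold_right Cadd C0 l.
Definition Cprod (l : list Cx) : Cx := fold_right Cmul C1 l.

Definition wa (g x : Cx) : Cx := Csinh (Cadd x g).
Definition wb (g x : Cx) : Cx := Csinh x.
Definition wc (g x : Cx) : Cx := Csinh g.

(** Spins: [false] = v_1, [true] = v_2.
    [Rel g x a s a' s'] = < v_a (x) v_s | R(x) | v_a' (x) v_s' >, first factor auxiliary. *)
Definition Rel (g x : Cx) (a s a' s' : bool) : Cx :=
  if Bool.eqb a s then
    (if Bool.eqb a' a && Bool.eqb s' s then wa g x else C0)
  else if Bool.eqb a' a && Bool.eqb s' s then wb g x
  else if Bool.eqb a' s && Bool.eqb s' a then wc g x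
  else C0.

(** Matrix elements < v_a (x) v_s | T_0(x) | v_b (x) v_s' > of the monodromy matrix
    T_0(x) = R_01(x-mu_1) ... R_0n(x-mu_n), with quantum states given as lists of spins. *)
Fixpoint Tel (g x : Cx) (mus : list Cx) (a b : bool) (s s' : list bool) : Cx :=
  match mus, s, s' with
  | [], [], [] => if Bool.eqb a b then C1 else C0
  | mu :: mus', t :: ts, t' :: ts' =>
      Csum (map (fun c => Cmul (Rel g (Csub x mu) a t c t') (Tel g x mus' c b ts ts'))
                [false; true])
  | _, _, _ => C0
  end.

(** B(x) = upper-right entry (aux v_1 -> v_2 row/column) *)
Definition Bel (g x : Cx) (mus : list Cx) (s s' : list bool) : Cx :=
  Tel g x mus false true s s'.

Fixpoint states (n : nat) : list (list bool) :=
  match n with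
  | O => [[]]
  | S n' => flat_map (fun s => [false :: s; true :: s]) (states n')
  end.

Definition applyB (g x : Cx) (mus : list Cx) (v : list bool -> Cx) : list bool -> Cx :=
  fun s => Csum (map (fun s' => Cmul (Bel g x mus s s') (v s')) (states (length mus))).

Definition vac (L : nat) : list bool -> Cx :=
  fun s => if list_eq_dec Bool.bool_dec s (repeat false L) then C1 else C0.

Definition muList (L : nat) (mu : nat -> Cx) : list Cx := map mu (seq 1 L).

(** Z(y_1,...,y_L) = < 0bar | B(y_1) ... B(y_L) | 0 >, with <0bar| = (v_2^* )^{(x) L} *)
Definition Zdw (g : Cx) (L : nat) (mu : nat -> Cx) (y : nat -> Cx) : Cx :=
  (fold_right (fun k v => applyB g (y k) (muList L mu) v) (vac L) (seq 1 L))
    (repeat true L).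

(** X_i^0 : x_i replaced by x_0 (for i = 0 this is X itself on indices 1..L) *)
Definition Xrep (x : nat -> Cx) (i : nat) : nat -> Cx :=
  fun k => if Nat.eqb k i then x 0%nat else x k.

Definition ab (g x : Cx) : Cx := Cdiv (wa g x) (wb g x).

Definition rho (g : Cx) (L : nat) (mu x : nat -> Cx) (m i : nat) : Cx :=
  if Nat.eqb i m then
    Csub (Cprod (map (fun k => wa g (Csub (x m) (mu k))) (seq 1 L)))
         (Cmul (Cprod (map (fun k => wb g (Csub (x m) (mu k))) (seq 1 L)))
               (Cprod (map (fun k => ab g (Csub (x m) (x k)))
                           (filter (fun k => negb (Nat.eqb k m)) (seq 0 (S L))))))
  else if Nat.eqb i 0 then
    Cmul (Cdiv (wc g (Csub (x m) (x 0%nat))) (wb g (Csub (x m) (x 0%nat))))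
      (Cmul (Cprod (map (fun k => wb g (Csub (x 0%nat) (mu k))) (seq 1 L)))
            (Cprod (map (fun k => ab g (Csub (x 0%nat) (x k)))
                        (filter (fun k => negb (Nat.eqb k m)) (seq 1 L)))))
  else
    Cmul (Cdiv (wc g (Csub (x m) (x i))) (wb g (Csub (x m) (x i))))
      (Cmul (Cprod (map (fun k => wb g (Csub (x i) (mu k))) (seq 1 L)))
            (Cprod (map (fun k => ab g (Csub (x i) (x k)))
                        (filter (fun k => negb (Nat.eqb k i) && negb (Nat.eqb k m))
                                (seq 0 (S L)))))).

From Pilot Require Import Defs.
From Stdlib Require Import Reals List Bool Arith.
Import ListNotations.
From Stdlib Require Import Lra Lia Field Permutation FunctionalExtensionality.
Open Scope R_scope.

(* The Yang-Baxter equation for [R] gives the RTT relations for the monodromy matrix,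
   hence [B(x) B(y) = B(y) B(x)] and the exchange relation
   [D(x) B(y) = a/b(x-y) B(y) D(x) - c/b(x-y) B(x) D(y)].  The dual vacuum [<0bar|] is a
   left eigenvector of [D(x_m)] with eigenvalue [prod_k a(x_m - mu_k)], while [D(x_m)]
   applied to the Bethe vector [prod_(k <> m) B(x_k) |0>] gives a "wanted" term
   proportional to the same vector and, for each [j <> m], an "unwanted" term in which
   [B(x_j)] is replaced by [B(x_m)]; by commutativity of the [B]'s, pairing the
   unwanted vectors with [<0bar|] gives [Z(X_j^0)].  Equating the two evaluations of
   [<0bar| D(x_m) prod_(k <> m) B(x_k) |0>] is exactly [sum_i rho_i^(m) Z(X_i^0) = 0]. *)

(** * Complex numbers *)

Lemma Cx_eq (z w : Cx) : Re z = Re w -> Im z = Im w -> z = w.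
Proof. destruct z, w; simpl; intros; subst; reflexivity. Qed.

Lemma Cx_eq_dec (z w : Cx) : {z = w} + {z <> w}.
Proof.
  destruct z as [a b], w as [c d].
  destruct (Req_EM_T a c) as [-> | Hac]; [destruct (Req_EM_T b d) as [-> | Hbd] |].
  - left; reflexivity.
  - right; intros E; injection E; auto.
  - right; intros E; injection E; auto.
Qed.

Lemma Cring : ring_theory C0 Defs.C1 Cadd Cmul Csub Copp (@eq Cx).
Proof.
  constructor; intros; repeat match goal with z : Cx |- _ => destruct z end;
    apply Cx_eq; simpl; ring.
Qed.

Lemma Cfield : field_theory C0 Defs.C1 Cadd Cmul Csub Copp Cdiv Cinv (@eq Cx).
Proof.
  constructor; [exact Cring | intros E; injection E; lra | reflexivity |].
  intros [a b] Hz.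
  assert (a * a + b * b <> 0).
  { intros E; apply Hz; assert (a = 0) by nra; assert (b = 0) by nra; subst; reflexivity. }
  apply Cx_eq; simpl; field; assumption.
Qed.
Add Field Cfield : Cfield.

Lemma Cmul_cancel_l k z w : k <> C0 -> Cmul k z = Cmul k w -> z = w.
Proof.
  intros Hk E; transitivity (Cdiv (Cmul k z) k); [field; exact Hk |].
  rewrite E; field; exact Hk.
Qed.

Lemma Csub_eq0 z w : Csub z w = C0 -> z = w.
Proof. intros E; transitivity (Cadd (Csub z w) w); [ring | rewrite E; ring]. Qed.

Lemma Cexp_add z w : Cexp (Cadd z w) = Cmul (Cexp z) (Cexp w).
Proof.
  destruct z as [a b], w as [c d]; apply Cx_eq; simpl;
    rewrite exp_plus; [rewrite cos_plus | rewrite sin_plus]; ring.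
Qed.

Lemma Cexp_neq0 z : Cexp z <> C0.
Proof.
  destruct z as [a b]; intros E; injection E; intros Hs Hc.
  pose proof (exp_pos a); pose proof (sin2_cos2 b); unfold Rsqr in *.
  assert (cos b = 0) by (apply Rmult_eq_reg_l with (exp a); lra).
  assert (sin b = 0) by (apply Rmult_eq_reg_l with (exp a); lra).
  nra.
Qed.

Lemma Cexp_opp z : Cexp (Copp z) = Cinv (Cexp z).
Proof.
  assert (Hinv : Cmul (Cexp (Copp z)) (Cexp z) = Defs.C1).
  { rewrite <- Cexp_add; destruct z as [a b]; apply Cx_eq; simpl;
      rewrite !Rplus_opp_l, exp_0, ?cos_0, ?sin_0; ring. }
  pose proof (Cexp_neq0 z).
  transitivity (Cdiv (Cmul (Cexp (Copp z)) (Cexp z)) (Cexp z)); [field; auto |].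
  rewrite Hinv; field; auto.
Qed.

Lemma Cexp_sub z w : Cexp (Csub z w) = Cdiv (Cexp z) (Cexp w).
Proof. unfold Csub; rewrite Cexp_add, Cexp_opp; reflexivity. Qed.

Definition Chalf : Cx := mkC (1/2) 0.

Lemma Chalf_neq0 : Chalf <> C0.
Proof. intros E; injection E; lra. Qed.

Lemma Csinh_exp z : Csinh z = Cmul (Csub (Cexp z) (Cinv (Cexp z))) Chalf.
Proof. unfold Csinh; rewrite Cexp_opp; reflexivity. Qed.

(* Every identity between six-vertex weights becomes a rational identity in the
   exponentials of the free variables, which [field] then decides. *)
Ltac weights_to_exp :=
  unfold wa, wb, wc in *; rewrite ?Csinh_exp in *;
  repeat rewrite ?Cexp_add, ?Cexp_sub, ?Cexp_opp in *.

Ltac exp_nonzero := repeat split; try apply Cexp_neq0; try apply Chalf_neq0.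

(** * The monodromy matrix and the RTT relation *)

Definition bsum (f : bool -> Cx) : Cx := Cadd (f false) (f true).

Lemma bsum_ext f h : (forall c, f c = h c) -> bsum f = bsum h.
Proof. intros H; unfold bsum; rewrite !H; reflexivity. Qed.

Lemma yang_baxter g x y mu a b t c' d' t'' :
  bsum (fun c => bsum (fun d => bsum (fun t1 =>
    Cmul (Cmul (Rel g (Csub x y) a b c d) (Rel g (Csub x mu) c t c' t1))
         (Rel g (Csub y mu) d t1 d' t'')))) =
  bsum (fun c => bsum (fun d => bsum (fun t1 =>
    Cmul (Cmul (Rel g (Csub y mu) b t d t1) (Rel g (Csub x mu) a t1 c t''))
         (Rel g (Csub x y) c d c' d')))).
Proof.
  destruct a, b, t, c', d', t''; unfold bsum, Rel; cbn [Bool.eqb andb];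
    weights_to_exp; field; exp_nonzero.
Qed.

Lemma Csum_map_add {A} (F G : A -> Cx) l :
  Csum (map (fun s => Cadd (F s) (G s)) l) = Cadd (Csum (map F l)) (Csum (map G l)).
Proof. induction l as [|a l IH]; simpl; [|rewrite IH]; ring. Qed.

Lemma Csum_map_sub {A} (F G : A -> Cx) l :
  Csum (map (fun s => Csub (F s) (G s)) l) = Csub (Csum (map F l)) (Csum (map G l)).
Proof. induction l as [|a l IH]; simpl; [|rewrite IH]; ring. Qed.

Lemma Csum_map_scal {A} k (F : A -> Cx) l :
  Csum (map (fun s => Cmul k (F s)) l) = Cmul k (Csum (map F l)).
Proof. induction l as [|a l IH]; simpl; [|rewrite IH]; ring. Qed.

Lemma Csum_cons z l : Csum (z :: l) = Cadd z (Csum l).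
Proof. reflexivity. Qed.

Lemma Csum_map_ext {A} (F G : A -> Cx) l :
  (forall s, In s l -> F s = G s) -> Csum (map F l) = Csum (map G l).
Proof. intros H; rewrite (map_ext_in F G l H); reflexivity. Qed.

Lemma Csum_map_bsum {A} (F : bool -> A -> Cx) l :
  Csum (map (fun s => bsum (fun c => F c s)) l) = bsum (fun c => Csum (map (F c) l)).
Proof. apply Csum_map_add. Qed.

Lemma Csum_map_zero {A} (l : list A) : Csum (map (fun _ => C0) l) = C0.
Proof. induction l as [|a l IH]; simpl; [|rewrite IH]; ring. Qed.

Lemma Csum_perm l l' : Permutation l l' -> Csum l = Csum l'.
Proof. induction 1; simpl; try ring; congruence. Qed.

Lemma Csum_states_S n (F : list bool -> Cx) :
  Csum (map F (states (S n))) = Csum (map (fun s => bsum (fun c => F (c :: s))) (states n)).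
Proof. simpl; induction (states n) as [|s l IH]; simpl; [|rewrite IH; unfold bsum]; ring. Qed.

Definition vec := list bool -> Cx.

Definition Tapp g x mus a b (v : vec) : vec :=
  fun s => Csum (map (fun s' => Cmul (Tel g x mus a b s s') (v s')) (states (length mus))).

Lemma Tapp_nil g x a b v s :
  Tapp g x [] a b v s =
  match s with [] => Cmul (if Bool.eqb a b then Defs.C1 else C0) (v []) | _ => C0 end.
Proof. unfold Tapp; destruct s; simpl; ring. Qed.

Lemma Tapp_cons_nil g x mu mus a b v : Tapp g x (mu :: mus) a b v [] = C0.
Proof.
  unfold Tapp; rewrite <- (Csum_map_zero (states (length (mu :: mus)))).
  apply Csum_map_ext; intros [|t s'] _; simpl; ring.
Qed.

Lemma Tapp_cons g x mu mus a b v t s :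
  Tapp g x (mu :: mus) a b v (t :: s) =
  bsum (fun c => bsum (fun t1 => Cmul (Rel g (Csub x mu) a t c t1)
        (Tapp g x mus c b (fun s' => v (t1 :: s')) s))).
Proof.
  unfold Tapp; cbn [length]; rewrite Csum_states_S.
  transitivity (Csum (map (fun s' => bsum (fun c => bsum (fun t1 =>
     Cmul (Rel g (Csub x mu) a t c t1) (Cmul (Tel g x mus c b s s') (v (t1 :: s'))))))
     (states (length mus)))).
  { apply Csum_map_ext; intros s' _; simpl; unfold bsum; ring. }
  rewrite Csum_map_bsum; apply bsum_ext; intro c.
  rewrite Csum_map_bsum; apply bsum_ext; intro t1.
  apply Csum_map_scal.
Qed.

Lemma Tapp_ext g x mus a b v w s :
  (forall s', v s' = w s') -> Tapp g x mus a b v s = Tapp g x mus a b w s.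
Proof. intros H; apply Csum_map_ext; intros; rewrite H; reflexivity. Qed.

Lemma Tapp_add g x mus a b v w s :
  Tapp g x mus a b (fun s' => Cadd (v s') (w s')) s =
  Cadd (Tapp g x mus a b v s) (Tapp g x mus a b w s).
Proof. unfold Tapp; rewrite <- Csum_map_add; apply Csum_map_ext; intros; ring. Qed.

Lemma Tapp_scal g x mus a b k v s :
  Tapp g x mus a b (fun s' => Cmul k (v s')) s = Cmul k (Tapp g x mus a b v s).
Proof. unfold Tapp; rewrite <- Csum_map_scal; apply Csum_map_ext; intros; ring. Qed.

Lemma Tapp_sub g x mus a b v w s :
  Tapp g x mus a b (fun s' => Csub (v s') (w s')) s =
  Csub (Tapp g x mus a b v s) (Tapp g x mus a b w s).
Proof.
  rewrite (Tapp_ext _ _ _ _ _ _ (fun s' => Cadd (v s') (Cmul (Copp Defs.C1) (w s'))))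
    by (intros; ring).
  rewrite Tapp_add, Tapp_scal; ring.
Qed.

Lemma Tapp_zero g x mus a b s : Tapp g x mus a b (fun _ => C0) s = C0.
Proof.
  unfold Tapp; transitivity (Csum (map (fun _ => C0) (states (length mus)))).
  - apply Csum_map_ext; intros; ring.
  - apply Csum_map_zero.
Qed.

Lemma Tapp_Csum {A} g x mus a b (F : A -> vec) l s :
  Tapp g x mus a b (fun s' => Csum (map (fun j => F j s') l)) s =
  Csum (map (fun j => Tapp g x mus a b (F j) s) l).
Proof.
  induction l as [|j l IH]; simpl; [apply Tapp_zero |].
  rewrite <- IH; apply (Tapp_add g x mus a b (F j)).
Qed.

Lemma Tapp_bsum2 g x mus a b (k : bool -> bool -> Cx) (F : bool -> bool -> vec) s :
  Tapp g x mus a b (fun s' => bsum (fun c => bsum (fun d => Cmul (k c d) (F c d s')))) s =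
  bsum (fun c => bsum (fun d => Cmul (k c d) (Tapp g x mus a b (F c d) s))).
Proof.
  unfold bsum; rewrite !Tapp_add, !Tapp_scal; reflexivity.
Qed.

Section RTT.
Variables (g x y : Cx).
Let Rxy := Rel g (Csub x y).

(* One site of the RTT relation: the Yang-Baxter equation moves [R(x-y)] past
   the two local R-matrices, and [IH] moves it past the rest of the chain. *)
Lemma RTT_site mu a b t e f (P : bool -> bool -> bool -> Cx)
    (Q : bool -> bool -> bool -> bool -> bool -> Cx) :
  (forall c d t2, bsum (fun c' => bsum (fun d' => Cmul (Rxy c d c' d') (P c' d' t2))) =
                  bsum (fun c' => bsum (fun d' => Cmul (Rxy c' d' e f) (Q d d' c c' t2)))) ->
  bsum (fun c => bsum (fun d => Cmul (Rxy a b c d)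
     (bsum (fun c' => bsum (fun t1 => Cmul (Rel g (Csub x mu) c t c' t1)
        (bsum (fun d' => bsum (fun t2 => Cmul (Rel g (Csub y mu) d t1 d' t2) (P c' d' t2))))))))) =
  bsum (fun c' => bsum (fun d' => Cmul (Rxy c' d' e f)
     (bsum (fun d => bsum (fun t1 => Cmul (Rel g (Csub y mu) b t d t1)
        (bsum (fun c => bsum (fun t2 => Cmul (Rel g (Csub x mu) a t1 c t2) (Q d d' c c' t2))))))))).
Proof.
  intros IH.
  transitivity (bsum (fun c' => bsum (fun d' => bsum (fun t2 =>
     Cmul (bsum (fun c => bsum (fun d => bsum (fun t1 =>
       Cmul (Cmul (Rxy a b c d) (Rel g (Csub x mu) c t c' t1)) (Rel g (Csub y mu) d t1 d' t2)))))
       (P c' d' t2))))).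
  { unfold bsum; ring. }
  transitivity (bsum (fun c' => bsum (fun d' => bsum (fun t2 =>
     Cmul (bsum (fun c => bsum (fun d => bsum (fun t1 =>
       Cmul (Cmul (Rel g (Csub y mu) b t d t1) (Rel g (Csub x mu) a t1 c t2)) (Rxy c d c' d')))))
       (P c' d' t2))))).
  { do 3 (apply bsum_ext; intro); unfold Rxy; rewrite yang_baxter; reflexivity. }
  transitivity (bsum (fun t2 => bsum (fun c => bsum (fun d =>
     Cmul (bsum (fun t1 => Cmul (Rel g (Csub y mu) b t d t1) (Rel g (Csub x mu) a t1 c t2)))
      (bsum (fun c' => bsum (fun d' => Cmul (Rxy c d c' d') (P c' d' t2)))))))).
  { unfold bsum; ring. }
  rewrite (bsum_ext _ _ (fun t2 => bsum_ext _ _ (fun c => bsum_ext _ _ (fun d =>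
             f_equal (Cmul _) (IH c d t2))))).
  unfold bsum; ring.
Qed.

Lemma RTT mus : forall a b e f v s,
  bsum (fun c => bsum (fun d =>
    Cmul (Rxy a b c d) (Tapp g x mus c e (Tapp g y mus d f v) s))) =
  bsum (fun c => bsum (fun d =>
    Cmul (Rxy c d e f) (Tapp g y mus b d (Tapp g x mus a c v) s))).
Proof.
  induction mus as [|mu mus IH]; intros a b e f v [|t s].
  - unfold bsum; rewrite !Tapp_nil; destruct a, b, e, f; unfold Rxy, Rel; simpl; ring.
  - unfold bsum; rewrite !Tapp_nil; ring.
  - unfold bsum; rewrite !Tapp_cons_nil; ring.
  - set (P := fun c' d' t2 =>
             Tapp g x mus c' e (Tapp g y mus d' f (fun s' => v (t2 :: s'))) s).
    set (Q := fun d d' c c' t2 =>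
             Tapp g y mus d d' (Tapp g x mus c c' (fun s' => v (t2 :: s'))) s).
    transitivity (bsum (fun c => bsum (fun d => Cmul (Rxy a b c d)
       (bsum (fun c' => bsum (fun t1 => Cmul (Rel g (Csub x mu) c t c' t1)
         (bsum (fun d' => bsum (fun t2 => Cmul (Rel g (Csub y mu) d t1 d' t2) (P c' d' t2)))))))))).
    { do 2 (apply bsum_ext; intro); rewrite Tapp_cons; f_equal.
      do 2 (apply bsum_ext; intro); f_equal.
      erewrite Tapp_ext; [apply Tapp_bsum2 | intro; apply Tapp_cons]. }
    rewrite (RTT_site mu a b t e f P Q) by (intros; apply IH).
    do 2 (apply bsum_ext; intro); rewrite Tapp_cons; f_equal.
    do 2 (apply bsum_ext; intro); f_equal.
    symmetry; erewrite Tapp_ext; [apply Tapp_bsum2 | intro; apply Tapp_cons].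
Qed.
End RTT.

(** * Exchange relations *)

Definition Bop g x mus := Tapp g x mus false true.
Definition Dop g x mus := Tapp g x mus true true.

Lemma B_commute_weighted g x y mus v s :
  Cmul (wa g (Csub x y)) (Bop g x mus (Bop g y mus v) s) =
  Cmul (wa g (Csub x y)) (Bop g y mus (Bop g x mus v) s).
Proof.
  pose proof (RTT g x y mus false false true true v s) as H.
  unfold bsum, Rel in H; cbn [Bool.eqb andb] in H; unfold Bop.
  lazymatch type of H with ?A = ?B => transitivity A; [ring | rewrite H; ring] end.
Qed.

Lemma D_B_relation g x y mus v s :
  Cadd (Cmul (wb g (Csub x y)) (Dop g x mus (Bop g y mus v) s))
       (Cmul (wc g (Csub x y)) (Bop g x mus (Dop g y mus v) s)) =
  Cmul (wa g (Csub x y)) (Bop g y mus (Dop g x mus v) s).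
Proof.
  pose proof (RTT g x y mus true false true true v s) as H.
  unfold bsum, Rel in H; cbn [Bool.eqb andb] in H; unfold Bop, Dop.
  lazymatch type of H with ?A = ?B => transitivity A; [ring | rewrite H; ring] end.
Qed.

Definition cb (g z : Cx) : Cx := Cdiv (wc g z) (wb g z).

Lemma exchange_weights g u v w :
  wb g (Csub u v) <> C0 -> wb g (Csub u w) <> C0 -> wb g (Csub v w) <> C0 ->
  wb g (Csub w v) <> C0 ->
  Csub (Cmul (ab g (Csub u v)) (cb g (Csub u w))) (Cmul (cb g (Csub u v)) (cb g (Csub v w))) =
  Cmul (cb g (Csub u w)) (ab g (Csub w v)).
Proof.
  intros; unfold ab, cb; field_simplify_eq; [| auto ..].
  weights_to_exp; field; exp_nonzero.
Qed.

Lemma D_B_exchange g x y mus v s : wb g (Csub x y) <> C0 ->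
  Dop g x mus (Bop g y mus v) s =
  Csub (Cmul (ab g (Csub x y)) (Bop g y mus (Dop g x mus v) s))
       (Cmul (cb g (Csub x y)) (Bop g x mus (Dop g y mus v) s)).
Proof.
  intros Hb; apply (Cmul_cancel_l (wb g (Csub x y))); [exact Hb |].
  transitivity (Csub (Cmul (wa g (Csub x y)) (Bop g y mus (Dop g x mus v) s))
                     (Cmul (wc g (Csub x y)) (Bop g x mus (Dop g y mus v) s))).
  - rewrite <- D_B_relation; ring.
  - unfold ab, cb; field; exact Hb.
Qed.

(** * Commutativity of [B] *)

Lemma continuity_plus_fun f1 f2 :
  continuity f1 -> continuity f2 -> continuity (fun t => f1 t + f2 t).
Proof. apply continuity_plus. Qed.

Lemma continuity_mult_fun f1 f2 :
  continuity f1 -> continuity f2 -> continuity (fun t => f1 t * f2 t).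
Proof. apply continuity_mult. Qed.

Lemma continuity_opp_fun f : continuity f -> continuity (fun t => - f t).
Proof. apply continuity_opp. Qed.

Lemma continuity_comp_fun f1 f2 :
  continuity f1 -> continuity f2 -> continuity (fun t => f2 (f1 t)).
Proof. intros; apply (continuity_comp f1 f2); assumption. Qed.

Lemma continuity_cst c : continuity (fun _ => c).
Proof. apply continuity_const; intros ? ?; reflexivity. Qed.

Lemma continuous_eq0 f : continuity f -> (forall t, t <> 0 -> f t = 0) -> f 0 = 0.
Proof.
  intros Hc Hz; destruct (Req_dec (f 0) 0) as [|Hn]; [assumption | exfalso].
  destruct (Hc 0 (Rabs (f 0)) (Rabs_pos_lt _ Hn)) as [del [Hdel Hball]].
  specialize (Hball (del / 2)); simpl in Hball; unfold R_dist in Hball.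
  rewrite Hz, Rminus_0_l, Rabs_Ropp in Hball by lra.
  assert (Rabs (f 0) < Rabs (f 0)); [| lra].
  apply Hball; split; [split; [constructor | lra] |].
  rewrite Rminus_0_r, Rabs_right; lra.
Qed.

Definition Ccont (F : R -> Cx) :=
  continuity (fun t => Re (F t)) /\ continuity (fun t => Im (F t)).

Lemma Ccont_const c : Ccont (fun _ => c).
Proof. split; apply continuity_cst. Qed.

Lemma Ccont_add F G : Ccont F -> Ccont G -> Ccont (fun t => Cadd (F t) (G t)).
Proof. intros [] []; split; apply continuity_plus_fun; assumption. Qed.

Lemma Ccont_mul F G : Ccont F -> Ccont G -> Ccont (fun t => Cmul (F t) (G t)).
Proof.
  intros [] []; split; simpl; apply continuity_plus_fun;
    try apply continuity_opp_fun; apply continuity_mult_fun; assumption.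
Qed.

Lemma Ccont_sub F G : Ccont F -> Ccont G -> Ccont (fun t => Csub (F t) (G t)).
Proof.
  intros HF [HG1 HG2]; apply Ccont_add; [exact HF |].
  split; apply continuity_opp_fun; assumption.
Qed.

Lemma Ccont_sinh F : Ccont F -> Ccont (fun t => Csinh (F t)).
Proof.
  assert (Hexp : forall F, Ccont F -> Ccont (fun t => Cexp (F t))).
  { intros G [HG1 HG2]; split; apply continuity_mult_fun; apply continuity_comp_fun;
      auto using continuity_cos, continuity_sin, derivable_continuous, derivable_exp. }
  intros HF; apply Ccont_mul; [| apply Ccont_const].
  apply Ccont_sub; apply Hexp; [exact HF |].
  destruct HF; split; apply continuity_opp_fun; assumption.
Qed.

Lemma Ccont_shift y : Ccont (fun t => Cadd y (mkC t 0)).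
Proof.
  split; simpl; apply continuity_plus_fun; try apply continuity_cst.
  apply derivable_continuous, derivable_id.
Qed.

Lemma Ccont_Tel g X mus : Ccont X -> forall a b s s', Ccont (fun t => Tel g (X t) mus a b s s').
Proof.
  intros HX; induction mus as [|mu mus IH]; intros a b [|u s] [|u' s'];
    simpl; try apply Ccont_const.
  assert (HR : forall c r c' r', Ccont (fun t => Rel g (Csub (X t) mu) c r c' r')).
  { intros; unfold Rel, wa, wb, wc.
    destruct (Bool.eqb c r), (Bool.eqb c' c && Bool.eqb r' r), (Bool.eqb c' r && Bool.eqb r' c);
      try apply Ccont_const; apply Ccont_sinh;
      repeat apply Ccont_add; auto using Ccont_sub, Ccont_const. }
  repeat apply Ccont_add; auto using Ccont_const, Ccont_mul.
Qed.

Lemma Ccont_Tapp g X mus a b (W : R -> vec) s : Ccont X -> (forall s', Ccont (fun t => W t s')) ->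
  Ccont (fun t => Tapp g (X t) mus a b (W t) s).
Proof.
  intros HX HW; unfold Tapp; induction (states (length mus)); simpl;
    auto using Ccont_const, Ccont_add, Ccont_mul, Ccont_Tel.
Qed.

Lemma Ccont_eq0 F : Ccont F -> (forall t, t <> 0 -> F t = C0) -> F 0 = C0.
Proof.
  intros [H1 H2] Hz; apply Cx_eq;
    [apply (continuous_eq0 (fun t => Re (F t))) | apply (continuous_eq0 (fun t => Im (F t)))];
    auto; intros t Ht; rewrite Hz; auto.
Qed.

(* [sinh] is antiperiodic with period [i pi], so two of its zeros never differ by a
   nonzero real number. *)
Lemma Csinh_shift_neq0 w t : Csinh w = C0 -> t <> 0 -> Csinh (Csub w (mkC t 0)) <> C0.
Proof.
  intros H Ht H2; rewrite Csinh_exp in H, H2; rewrite Cexp_sub in H2.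
  set (E := Cexp w) in *; set (T := Cexp (mkC t 0)) in *.
  assert (HE : E <> C0) by apply Cexp_neq0; assert (HT : T <> C0) by apply Cexp_neq0.
  pose proof Chalf_neq0.
  assert (E1 : Cmul E E = Defs.C1).
  { replace (Cmul E E) with (Cadd (Cdiv (Cmul (Cmul (Csub E (Cinv E)) Chalf) E) Chalf) Defs.C1)
      by (field; auto).
    rewrite H; field; auto. }
  assert (E2 : Cmul E E = Cmul T T).
  { replace (Cmul E E) with (Cadd (Cdiv (Cmul (Cmul (Cmul (Csub (Cdiv E T) (Cinv (Cdiv E T)))
      Chalf) E) T) Chalf) (Cmul T T)) by (field; auto).
    rewrite H2; field; auto. }
  rewrite E1 in E2; unfold T, Cexp in E2; simpl in E2; rewrite cos_0, sin_0 in E2.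
  injection E2; intros _ E3.
  assert (E4 : exp (t + t) = exp 0) by (rewrite exp_plus, exp_0; lra).
  apply exp_inv in E4; lra.
Qed.

(* Where [a(x-y)] vanishes, [B(x)B(y) = B(y)B(x)] follows by continuity in [y]. *)
Lemma B_commute g x y mus v s : Bop g x mus (Bop g y mus v) s = Bop g y mus (Bop g x mus v) s.
Proof.
  destruct (Cx_eq_dec (wa g (Csub x y)) C0) as [Ha | Ha];
    [| exact (Cmul_cancel_l _ _ _ Ha (B_commute_weighted g x y mus v s))].
  set (yt := fun t => Cadd y (mkC t 0)).
  assert (Hy0 : yt 0 = y) by (destruct y; apply Cx_eq; simpl; ring).
  apply Csub_eq0; rewrite <- Hy0.
  apply (Ccont_eq0 (fun t =>
    Csub (Bop g x mus (Bop g (yt t) mus v) s) (Bop g (yt t) mus (Bop g x mus v) s))).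
  - unfold Bop; apply Ccont_sub; apply Ccont_Tapp; try apply Ccont_shift;
      try apply Ccont_const; intros; apply Ccont_Tapp; try apply Ccont_shift;
      intros; apply Ccont_const.
  - intros t Ht.
    assert (Hn : wa g (Csub x (yt t)) <> C0).
    { unfold wa in *; unfold yt.
      replace (Cadd (Csub x (Cadd y (mkC t 0))) g) with (Csub (Cadd (Csub x y) g) (mkC t 0))
        by ring.
      apply Csinh_shift_neq0; assumption. }
    rewrite (Cmul_cancel_l _ _ _ Hn (B_commute_weighted g x (yt t) mus v s)); ring.
Qed.

(** * Algebraic Bethe ansatz *)

Lemma vac_0_cons t s : vac 0 (t :: s) = C0.
Proof. reflexivity. Qed.

Lemma vac_S_nil n : vac (S n) [] = C0.
Proof. reflexivity. Qed.

Lemma vac_S_cons n t s : vac (S n) (t :: s) = if t then C0 else vac n s.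
Proof.
  unfold vac; simpl.
  destruct (list_eq_dec Bool.bool_dec (t :: s) (false :: repeat false n)) as [E | E];
    destruct (list_eq_dec Bool.bool_dec s (repeat false n)) as [E' | E'];
    destruct t; try discriminate; reflexivity.
Qed.

Definition without (j : nat) (l : list nat) : list nat := filter (fun k => negb (k =? j)) l.

Lemma without_notin j l : ~ In j l -> without j l = l.
Proof.
  induction l as [|k l IH]; simpl; intros Hj; [reflexivity |].
  destruct (Nat.eqb_spec k j); [tauto | simpl; rewrite IH; tauto].
Qed.

Lemma without_cons_eq j l : ~ In j l -> without j (j :: l) = l.
Proof. intros Hj; unfold without; simpl; rewrite Nat.eqb_refl; apply without_notin, Hj. Qed.

Lemma without_cons_neq j k l : k <> j -> without j (k :: l) = k :: without j l.
Proof.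
  intros Hkj; unfold without; simpl; destruct (Nat.eqb_spec k j); [contradiction | reflexivity].
Qed.

Lemma In_without k j l : In k (without j l) <-> In k l /\ k <> j.
Proof.
  unfold without; rewrite filter_In.
  destruct (Nat.eqb_spec k j); simpl; intuition congruence.
Qed.

Lemma not_In_without j l : ~ In j (without j l).
Proof. rewrite In_without; tauto. Qed.

Lemma without_without j i l :
  without j (without i l) = filter (fun k => negb (k =? j) && negb (k =? i)) l.
Proof.
  unfold without; induction l as [|k l IH]; simpl; [reflexivity |].
  destruct (k =? i); simpl; destruct (k =? j); simpl; congruence.
Qed.

Lemma without_comm i j l : without j (without i l) = without i (without j l).
Proof. rewrite !without_without; apply filter_ext; intros; apply andb_comm. Qed.

Lemma perm_cons_without j l : NoDup l -> In j l -> Permutation l (j :: without j l).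
Proof.
  intros Hnd Hj; destruct (in_split j l Hj) as (l1 & l2 & ->).
  apply NoDup_remove_2 in Hnd; rewrite in_app_iff in Hnd.
  unfold without; rewrite filter_app; simpl; rewrite Nat.eqb_refl; simpl.
  fold (without j l1) (without j l2); rewrite !without_notin by tauto.
  symmetry; apply Permutation_middle.
Qed.

Section Bethe.
Variables (g : Cx) (mus : list Cx).

Definition aprod (u : Cx) : Cx := Cprod (map (fun mu => wa g (Csub u mu)) mus).
Definition bprod (u : Cx) : Cx := Cprod (map (fun mu => wb g (Csub u mu)) mus).

Let top := repeat true (length mus).

Lemma D_top u v : Dop g u mus v top = Cmul (aprod u) (v top).
Proof.
  unfold top, aprod; revert v; induction mus as [|mu mus' IH]; intros v.
  - unfold Dop; rewrite Tapp_nil; simpl; ring.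
  - unfold Dop in *; simpl; rewrite Tapp_cons; unfold bsum, Rel; simpl.
    rewrite (IH (fun s' => v (true :: s'))); ring.
Qed.

Lemma D_vac u s : Dop g u mus (vac (length mus)) s = Cmul (bprod u) (vac (length mus) s).
Proof.
  unfold bprod; revert s; induction mus as [|mu mus' IH]; intros [|t s].
  - unfold Dop; rewrite Tapp_nil; reflexivity.
  - unfold Dop; rewrite Tapp_nil; simpl; rewrite vac_0_cons; ring.
  - unfold Dop; rewrite Tapp_cons_nil; cbn [length]; rewrite vac_S_nil; ring.
  - unfold Dop in *; simpl; rewrite Tapp_cons, vac_S_cons; unfold bsum.
    rewrite (Tapp_ext _ _ _ _ _ (fun s' => vac (S (length mus')) (true :: s')) (fun _ => C0))
      by (intros; apply vac_S_cons).
    rewrite !(Tapp_ext _ _ _ _ _ (fun s' => vac (S (length mus')) (false :: s'))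
                                 (vac (length mus')))
      by (intros; apply vac_S_cons).
    rewrite !Tapp_zero; destruct t; unfold Rel; simpl; [ring |].
    rewrite IH; ring.
Qed.

Definition bethe (zs : list Cx) : vec :=
  fold_right (fun z v => Bop g z mus v) (vac (length mus)) zs.

Lemma bethe_perm zs zs' : Permutation zs zs' -> bethe zs = bethe zs'.
Proof.
  induction 1; simpl; try congruence.
  extensionality s; apply B_commute.
Qed.

Lemma B_bethe_expansion {A} z V k zs (c : A -> Cx) (zs' : A -> list Cx) l s :
  (forall s', V s' = Csub (Cmul k (bethe zs s'))
                          (Csum (map (fun j => Cmul (c j) (bethe (zs' j) s')) l))) ->
  Bop g z mus V s =
  Csub (Cmul k (bethe (z :: zs) s)) (Csum (map (fun j => Cmul (c j) (bethe (z :: zs' j) s)) l)).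
Proof.
  intros HV; unfold Bop; rewrite (Tapp_ext _ _ _ _ _ _ _ _ HV), Tapp_sub, Tapp_scal, Tapp_Csum.
  f_equal; apply Csum_map_ext; intros; apply Tapp_scal.
Qed.

Definition abprod (y : nat -> Cx) (j : nat) (l : list nat) : Cx :=
  Cprod (map (fun k => ab g (Csub (y j) (y k))) l).

Lemma abprod_cons y j k l : abprod y j (k :: l) = Cmul (ab g (Csub (y j) (y k))) (abprod y j l).
Proof. reflexivity. Qed.

(* [D(y_o)] on a Bethe vector: the "wanted" term keeps the vector, the "unwanted"
   term [j] replaces [y_j] by [y_o]. *)
Definition D_bethe_rhs (y : nat -> Cx) (o : nat) (l : list nat) : vec := fun s =>
  Csub (Cmul (Cmul (abprod y o l) (bprod (y o))) (bethe (map y l) s))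
       (Csum (map (fun j => Cmul (Cmul (Cmul (cb g (Csub (y o) (y j))) (abprod y j (without j l)))
                                       (bprod (y j)))
                                 (bethe (y o :: map y (without j l)) s)) l)).

Theorem D_bethe (y : nat -> Cx) l : NoDup l -> forall o, ~ In o l ->
  (forall i j, In i (o :: l) -> In j (o :: l) -> i <> j -> wb g (Csub (y i) (y j)) <> C0) ->
  forall s, Dop g (y o) mus (bethe (map y l)) s = D_bethe_rhs y o l s.
Proof.
  induction 1 as [|j1 l Hj1 Hnd IH]; intros o Ho Hb s.
  - unfold D_bethe_rhs; simpl; rewrite D_vac; unfold abprod; simpl; ring.
  - assert (Hol : ~ In o l) by (intros H; apply Ho; right; exact H).
    assert (Hoj1 : o <> j1) by (intros ->; apply Ho; left; reflexivity).
    assert (IHo := IH o Hol ltac:(intros i j Hi Hj Hij; apply Hb; simpl in *; tauto)).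
    assert (IHj1 := IH j1 Hj1 ltac:(intros i j Hi Hj Hij; apply Hb; simpl in *; tauto)).
    unfold D_bethe_rhs in IHo, IHj1.
    change (bethe (map y (j1 :: l))) with (Bop g (y j1) mus (bethe (map y l))).
    rewrite D_B_exchange by (apply Hb; simpl; tauto).
    erewrite (B_bethe_expansion (y j1)) by apply IHo.
    erewrite (B_bethe_expansion (y o)) by apply IHj1.
    unfold D_bethe_rhs; cbn [map]; rewrite Csum_cons, without_cons_eq, abprod_cons by exact Hj1.
    match goal with
    | |- Csub (Cmul ?A (Csub _ (Csum (map ?P l)))) (Cmul ?C (Csub _ (Csum (map ?Q l)))) =
         Csub _ (Cadd _ (Csum (map ?R l))) =>
      assert (HR : Csum (map R l) = Csub (Cmul A (Csum (map P l))) (Cmul C (Csum (map Q l))))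
    end.
    { rewrite <- !Csum_map_scal, <- Csum_map_sub; apply Csum_map_ext; intros j Hj.
      assert (Hoj : o <> j) by (intros ->; contradiction).
      assert (Hj1j : j1 <> j) by (intros ->; contradiction).
      rewrite without_cons_neq by congruence; cbn [map]; rewrite abprod_cons.
      rewrite (bethe_perm _ _ (perm_swap (y o) (y j1) _)).
      transitivity (Cmul (Cmul (cb g (Csub (y o) (y j))) (ab g (Csub (y j) (y j1))))
        (Cmul (Cmul (abprod y j (without j l)) (bprod (y j)))
              (bethe (y o :: y j1 :: map y (without j l)) s))); [ring |].
      rewrite <- (exchange_weights g (y o) (y j1) (y j)) by (apply Hb; simpl; intuition congruence).
      ring. }
    rewrite HR; ring.
Qed.
End Bethe.

(** * The partition function *)

Lemma muList_length L mu : length (muList L mu) = L.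
Proof. unfold muList; rewrite length_map, length_seq; reflexivity. Qed.

Lemma Zdw_bethe g L mu y :
  Zdw g L mu y = bethe g (muList L mu) (map y (seq 1 L)) (repeat true L).
Proof.
  unfold Zdw, bethe; rewrite muList_length.
  apply (f_equal (fun v : vec => v (repeat true L))).
  induction (seq 1 L) as [|k l IH]; simpl; [reflexivity | rewrite IH; reflexivity].
Qed.

Lemma Zdw_Xrep g L mu x i : (i <= L)%nat ->
  Zdw g L mu (Xrep x i) = bethe g (muList L mu) (map x (without i (seq 0 (S L)))) (repeat true L).
Proof.
  intros Hi; rewrite Zdw_bethe.
  apply (f_equal (fun v : vec => v (repeat true L))), bethe_perm.
  assert (H0 : ~ In 0%nat (seq 1 L)) by (rewrite in_seq; lia).
  assert (HX : forall l, ~ In i l -> map (Xrep x i) l = map x l).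
  { intros l Hl; apply map_ext_in; intros k Hk; unfold Xrep.
    destruct (Nat.eqb_spec k i); [subst; contradiction | reflexivity]. }
  change (seq 0 (S L)) with (0%nat :: seq 1 L).
  destruct (Nat.eq_dec i 0) as [-> | Hi0].
  - rewrite without_cons_eq, HX by assumption; reflexivity.
  - rewrite without_cons_neq by congruence.
    assert (Hperm := perm_cons_without i (seq 1 L) (seq_NoDup _ _) ltac:(rewrite in_seq; lia)).
    rewrite (Permutation_map _ Hperm); simpl.
    unfold Xrep at 1; rewrite Nat.eqb_refl, HX; [reflexivity |].
    apply not_In_without.
Qed.

Lemma rho_diag g L mu x m :
  rho g L mu x m m =
  Csub (aprod g (muList L mu) (x m))
       (Cmul (bprod g (muList L mu) (x m)) (abprod g x m (without m (seq 0 (S L))))).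
Proof.
  unfold rho, aprod, bprod, abprod, muList, without; rewrite Nat.eqb_refl, !map_map.
  reflexivity.
Qed.

Lemma rho_offdiag g L mu x m i : i <> m ->
  rho g L mu x m i =
  Cmul (cb g (Csub (x m) (x i)))
       (Cmul (bprod g (muList L mu) (x i)) (abprod g x i (without i (without m (seq 0 (S L)))))).
Proof.
  intros Him; unfold rho; destruct (Nat.eqb_spec i m) as [| _]; [contradiction |].
  rewrite without_without; unfold cb, bprod, abprod, muList; rewrite map_map.
  destruct (Nat.eqb_spec i 0) as [-> | _]; [| reflexivity].
  change (seq 0 (S L)) with (0%nat :: seq 1 L); simpl filter.
  do 4 f_equal; apply filter_ext_in; intros k Hk; rewrite in_seq in Hk.
  destruct (Nat.eqb_spec k 0); [lia | reflexivity].
Qed.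

Lemma rho_Zdw_unwanted g L mu x m j : (m <= L)%nat -> In j (without m (seq 0 (S L))) ->
  Cmul (rho g L mu x m j) (Zdw g L mu (Xrep x j)) =
  Cmul (Cmul (Cmul (cb g (Csub (x m) (x j))) (abprod g x j (without j (without m (seq 0 (S L))))))
             (bprod g (muList L mu) (x j)))
       (bethe g (muList L mu) (x m :: map x (without j (without m (seq 0 (S L))))) (repeat true L)).
Proof.
  intros Hm Hj; apply In_without in Hj as [Hj Hjm]; rewrite in_seq in Hj.
  rewrite rho_offdiag, Zdw_Xrep by lia.
  assert (HmS : In m (without j (seq 0 (S L))))
    by (apply In_without; rewrite in_seq; split; [lia | congruence]).
  rewrite (bethe_perm _ _ _ _ (Permutation_map x
    (perm_cons_without m (without j (seq 0 (S L))) (NoDup_filter _ (seq_NoDup _ _)) HmS))).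
  rewrite without_comm; simpl; ring.
Qed.

Theorem corollary6p3 (g : Cx) (L : nat) (mu x : nat -> Cx) :
  (1 <= L)%nat ->
  (forall i k : nat, (i <= L)%nat -> (k <= L)%nat -> i <> k ->
     Csinh (Csub (x i) (x k)) <> C0) ->
  forall m : nat, (m <= L)%nat ->
    Csum (map (fun i => Cmul (rho g L mu x m i) (Zdw g L mu (Xrep x i))) (seq 0 (S L)))
    = C0.
Proof.
  intros _ Hx m Hm.
  assert (Hle : forall k, In k (m :: without m (seq 0 (S L))) -> (k <= L)%nat).
  { intros k [<- | Hk]; [exact Hm |]; apply In_without in Hk as [Hk _]; rewrite in_seq in Hk; lia. }
  assert (HD := D_bethe g (muList L mu) x (without m (seq 0 (S L)))
    (NoDup_filter _ (seq_NoDup _ _)) m (not_In_without m _)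
    (fun i j Hi Hj => Hx i j (Hle i Hi) (Hle j Hj)) (repeat true (length (muList L mu)))).
  rewrite D_top in HD; unfold D_bethe_rhs in HD; rewrite muList_length in HD.
  rewrite (Csum_perm _ _ (Permutation_map _ (perm_cons_without m (seq 0 (S L)) (seq_NoDup _ _)
    ltac:(rewrite in_seq; lia)))), map_cons, Csum_cons, rho_diag, Zdw_Xrep by exact Hm.
  rewrite (Csum_map_ext _ _ _ (fun j => rho_Zdw_unwanted g L mu x m j Hm)).
  lazymatch type of HD with Cmul ?A ?Z = Csub ?W ?U =>
    transitivity (Csub (Cmul A Z) (Csub W U)); [ring | rewrite HD; ring] end.
Qed.
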